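(* Let $k\ge4$ be even and let $(s_1,t_1\mid s_2,t_2\mid s_3,t_3)$ be a triple overlap in $\mathbb{C}$ with all $s_m,t_m\in\{1,\dots,k/2\}$, $s_1<s_2<s_3$ and $s_1<t_1$. Then $s_m<t_m$ for $m=1,2,3$ and $t_1<t_2<t_3$.
   Context: $\phi=\exp(2\pi\mathrm{i}/k)$, $\mathbf{k}=\{1,\dots,k-1\}$, $\mathbf{k}_0=\{0,\dots,k-1\}$. A quadruple $(i,j\mid s,t)\in\mathbf{k}^4$ with $i\ne s$ is an overlap if $\phi^\omega(\phi^j-1)(\phi^s-1)=(\phi^i-1)(\phi^t-1)$ for some $\omega\in\mathbf{k}_0$; it is trivial if one of $i\equiv\pm j$, $j\equiv\pm t$, $t\equiv\pm s$, $s\equiv\pm i\pmod k$ holds, nontrivial otherwise. $\mathcal{O}(\mathbb{C},k)$ is the set of nontrivial overlaps. A triple overlap $(s_1,t_1\mid s_2,t_2\mid s_3,t_3)$ (with $s_m,t_m\in\mathbf{k}$) means that $(s_1,t_1\mid s_2,t_2)$, $(s_2,t_2\mid s_3,t_3)$ and $(s_1,t_1\mid s_3,t_3)$ all belong to $\mathcal{O}(\mathbb{C},k)$. *)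

From mathcomp Require Import all_boot all_algebra.
From mathcomp Require Import complex.
From mathcomp Require Import Rstruct.
From Stdlib Require Import Reals.
Import GRing.Theory.

(* phi = exp(2 pi i / k) = cos(2 pi / k) + i sin(2 pi / k) in C = R[i],
   with R the Stdlib reals (a real-closed field via Rstruct). *)
Definition phi (k : nat) : complex R :=
  ((cos (2 * PI / INR k))%R +i* (sin (2 * PI / INR k))%R)%C.

Definition inK (k i : nat) : bool := (0 < i) && (i < k).

Definition pm_cong (k i j : nat) : bool :=
  (i == j %[mod k])%nat || ((i + j) %% k == 0)%nat.

Section Ov.
Local Open Scope ring_scope.
Definition overlap (k i j s t : nat) : Prop :=
  [/\ [&& inK k i, inK k j, inK k s & inK k t], (i != s)%nat &
      (exists omega : nat, (omega < k)%nat /\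
        (phi k ^+ omega * (phi k ^+ j - 1) * (phi k ^+ s - 1)
         = (phi k ^+ i - 1) * (phi k ^+ t - 1)))].

End Ov.

Definition trivial_overlap (k i j s t : nat) : bool :=
  [|| pm_cong k i j, pm_cong k j t, pm_cong k t s | pm_cong k s i].

Definition nontriv_overlap (k i j s t : nat) : Prop :=
  overlap k i j s t /\ ~~ trivial_overlap k i j s t.

Definition triple_overlap (k s1 t1 s2 t2 s3 t3 : nat) : Prop :=
  [/\ nontriv_overlap k s1 t1 s2 t2,
      nontriv_overlap k s2 t2 s3 t3 &
      nontriv_overlap k s1 t1 s3 t3].

From mathcomp Require Import all_boot all_algebra complex Rstruct.
From Stdlib Require Import Reals Lra.
Import GRing.Theory Num.Theory.

Set Implicit Arguments.
Unset Strict Implicit.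

(* Taking squared moduli in an overlap equation
     phi^w (phi^j - 1)(phi^s - 1) = (phi^i - 1)(phi^t - 1)
   kills the unimodular factor phi^w, and since |phi^a - 1|^2 = 2 vers a,
   where vers a = 1 - cos(2 pi a / k) is the versine of the angle of phi^a,
   every overlap (i,j | s,t) satisfies  vers j * vers s = vers i * vers t.
   On {0, ..., k/2} the angle 2 pi a / k stays in [0, pi], where cos is
   strictly decreasing, so vers is positive and strictly increasing there.
   Hence if i < s and i < j, then vers t = vers j * vers s / vers i exceeds
   both vers j and vers s, i.e. j < t and s < t (lemma overlap_order). *)

Definition sqnorm (z : complex R) : R :=
  Rplus (Rmult (complex.Re z) (complex.Re z)) (Rmult (complex.Im z) (complex.Im z)).

Definition step_angle (k : nat) : R := Rdiv (Rmult 2 PI) (INR k).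
Definition vers (k a : nat) : R := Rminus 1 (cos (Rmult (INR a) (step_angle k))).

(* Turn the ring operations of the real-closed field R back into the Stdlib
   ones, so that [ring] and [lra] of the Stdlib apply. *)
Ltac to_Rstd := rewrite -?RmultE -?RplusE -?RminusE -?RoppE -?R0E -?R1E.

Section ComplexModulus.
Local Open Scope ring_scope.

Lemma sqnormM (x y : complex R) : sqnorm (x * y) = Rmult (sqnorm x) (sqnorm y).
Proof. case: x => a b; case: y => c d; rewrite /sqnorm /=; to_Rstd; ring. Qed.

Lemma complex_mulE (a b c d : R) :
  Complex a b * Complex c d = Complex (a * c - b * d) (a * d + b * c).
Proof. by []. Qed.

Lemma phiX (k n : nat) :
  phi k ^+ n = Complex (cos (Rmult (INR n) (step_angle k)))
                       (sin (Rmult (INR n) (step_angle k))).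
Proof.
elim: n => [|n IHn]; first by rewrite expr0 /= Rmult_0_l cos_0 sin_0.
rewrite exprS IHn S_INR /phi complex_mulE; to_Rstd.
rewrite Rmult_plus_distr_r Rmult_1_l (Rplus_comm _ (step_angle k)).
by rewrite cos_plus sin_plus /step_angle; f_equal; ring.
Qed.

Lemma sqnorm_phiX (k a : nat) : sqnorm (phi k ^+ a) = R1.
Proof.
rewrite phiX /sqnorm /=; to_Rstd.
by have := sin2_cos2 (Rmult (INR a) (step_angle k)); rewrite /Rsqr; lra.
Qed.

Lemma sqnorm_phiX_sub1 (k a : nat) : sqnorm (phi k ^+ a - 1) = Rmult 2 (vers k a).
Proof.
rewrite phiX /sqnorm /vers /=; to_Rstd.
by have := sin2_cos2 (Rmult (INR a) (step_angle k)); rewrite /Rsqr; lra.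
Qed.

Lemma overlap_vers (k i j s t : nat) :
  overlap k i j s t -> Rmult (vers k j) (vers k s) = Rmult (vers k i) (vers k t).
Proof.
case=> _ _ [w [_ Ew]].
have := congr1 sqnorm Ew.
by rewrite !sqnormM !sqnorm_phiX_sub1 sqnorm_phiX; to_Rstd; lra.
Qed.

End ComplexModulus.

Section Versine.
Local Open Scope R_scope.
Variable k : nat.
Hypothesis k_gt0 : (0 < k)%nat.

Lemma angle_in_0_pi (a : nat) :
  (a.*2 <= k)%nat -> 0 <= INR a * step_angle k <= PI.
Proof.
move=> ak.
have Hk : 0 < INR k by apply: lt_0_INR; apply/ltP.
have Ha : 2 * INR a <= INR k.
  have : (a.*2 <= k)%coq_nat by apply/leP.
  by rewrite -addnn => /le_INR; rewrite plus_INR; lra.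
have Ha0 := pos_INR a; have Hpi := PI_RGT_0.
rewrite /step_angle; split.
  apply: Rmult_le_pos => //; apply: Rmult_le_pos; first lra.
  by apply/Rlt_le/Rinv_0_lt_compat.
apply: (Rmult_le_reg_r (INR k)) => //.
replace (INR a * (2 * PI / INR k) * INR k) with (2 * INR a * PI) by (field; lra).
nra.
Qed.

Lemma vers_lt (a b : nat) :
  (b.*2 <= k)%nat -> (a < b)%nat -> vers k a < vers k b.
Proof.
move=> bk ab.
have ak : (a.*2 <= k)%nat by apply: leq_trans bk; rewrite leq_double ltnW.
have [A0 Api] := angle_in_0_pi ak; have [B0 Bpi] := angle_in_0_pi bk.
have Hk : 0 < INR k by apply: lt_0_INR; apply/ltP.
have AB : INR a * step_angle k < INR b * step_angle k.
  apply: Rmult_lt_compat_r; last by apply/lt_INR/ltP.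
  by apply: Rdiv_lt_0_compat => //; have := PI_RGT_0; lra.
by have := cos_decreasing_1 _ _ A0 Api B0 Bpi AB; rewrite /vers; lra.
Qed.

Lemma vers_le (a b : nat) :
  (b.*2 <= k)%nat -> (a <= b)%nat -> vers k a <= vers k b.
Proof.
move=> bk; rewrite leq_eqVlt => /orP [/eqP -> | ab]; first lra.
exact/Rlt_le/vers_lt.
Qed.

Lemma vers_gt0 (a : nat) : (a.*2 <= k)%nat -> (0 < a)%nat -> 0 < vers k a.
Proof.
by move=> ak a0; have := vers_lt ak a0; rewrite /vers /= Rmult_0_l cos_0; lra.
Qed.

Lemma overlap_order (i j s t : nat) : overlap k i j s t ->
  (0 < i)%nat -> (j.*2 <= k)%nat -> (s.*2 <= k)%nat -> (t.*2 <= k)%nat ->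
  (i < s)%nat -> (i < j)%nat -> (j < t)%nat /\ (s < t)%nat.
Proof.
move=> /overlap_vers E i0 jk sk tk i_s i_j.
have ik : (i.*2 <= k)%nat by apply: leq_trans sk; rewrite leq_double ltnW.
have vi := vers_gt0 ik i0.
have vj := vers_gt0 jk (leq_ltn_trans (leq0n _) i_j).
have vs := vers_gt0 sk (leq_ltn_trans (leq0n _) i_s).
have vis := vers_lt sk i_s; have vij := vers_lt jk i_j.
(* vers t = vers j * vers s / vers i, with vers s / vers i > 1 and
   vers j / vers i > 1, so vers t cannot be at most vers j or vers s. *)
split.
- case: (leqP t j) => // tj; have vtj := vers_le jk tj.
  have : vers k i * vers k t < vers k j * vers k s.
    apply: (Rle_lt_trans _ (vers k i * vers k j)); first by apply: Rmult_le_compat_l => //; apply: Rlt_le.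
    by rewrite (Rmult_comm (vers k j)); apply: Rmult_lt_compat_r.
  lra.
- case: (leqP t s) => // ts; have vts := vers_le sk ts.
  have : vers k i * vers k t < vers k j * vers k s.
    apply: (Rle_lt_trans _ (vers k i * vers k s)); first by apply: Rmult_le_compat_l => //; apply: Rlt_le.
    exact: Rmult_lt_compat_r.
  lra.
Qed.

End Versine.

Lemma half_range (k x : nat) : (1 <= x <= k./2)%nat -> (0 < x)%nat /\ (x.*2 <= k)%nat.
Proof.
case/andP=> x_gt0 x_le; split => //.
apply: (leq_trans (n := k./2.*2)); first by rewrite leq_double.
by rewrite -{2}(odd_double_half k) leq_addl.
Qed.

Theorem lemma35 (k s1 t1 s2 t2 s3 t3 : nat) :
  (4 <= k)%N -> ~~ odd k ->
  triple_overlap k s1 t1 s2 t2 s3 t3 ->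
  (all (fun x => (1 <= x <= k./2)%N) [:: s1; t1; s2; t2; s3; t3]) ->
  (s1 < s2 < s3)%N -> (s1 < t1)%N ->
  [/\ (s1 < t1)%N, (s2 < t2)%N, (s3 < t3)%N & (t1 < t2 < t3)%N].
Proof.
move=> k_ge4 _ [[O12 _] [O23 _] [O13 _]] /=.
case/and5P=> /half_range [s1_gt0 _] /half_range [_ t1k] /half_range [s2_gt0 s2k]
  /half_range [_ t2k] /andP [/half_range [_ s3k] /andP [/half_range [_ t3k] _]].
case/andP=> s12 s23 st1.
have k_gt0 : (0 < k)%nat by apply: leq_trans k_ge4.
have [t12 st2] := overlap_order k_gt0 O12 s1_gt0 t1k s2k t2k s12 st1.
have [_ st3] := overlap_order k_gt0 O13 s1_gt0 t1k s3k t3k (ltn_trans s12 s23) st1.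
have [t23 _] := overlap_order k_gt0 O23 s2_gt0 t2k s3k t3k s23 st2.
by split => //; rewrite t12 t23.
Qed.
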